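(* Let $$y=\frac{9s(2s^3-3s+4)}{4(s+1)(s-1)^2(2s^2+6s+1)},\qquad t=\frac{27s^2}{4(s^2-1)^3}.$$ Then $y(t)$ is a solution of $\mathrm{P}_{\mathrm{VI}}$ with parameters $(\theta_1,\theta_2,\theta_3,\theta_4)=(1/2,1/2,1/4,2/3)$.
   Context: $\mathrm{P}_{\mathrm{VI}}$ is the equation $$\frac{d^2y}{dt^2}=\frac12\Big(\frac1y+\frac1{y-1}+\frac1{y-t}\Big)\Big(\frac{dy}{dt}\Big)^2-\Big(\frac1t+\frac1{t-1}+\frac1{y-t}\Big)\frac{dy}{dt}+\frac{y(y-1)(y-t)}{t^2(t-1)^2}\Big(\alpha+\beta\frac{t}{y^2}+\gamma\frac{t-1}{(y-1)^2}+\delta\frac{t(t-1)}{(y-t)^2}\Big),$$ with $\alpha=(\theta_4-1)^2/2$, $\beta=-\theta_1^2/2$, $\gamma=\theta_3^2/2$, $\delta=(1-\theta_2^2)/2$. When $y,t$ are given as rational functions of a parameter on a curve, derivatives with respect to $t$ are computed via the chain rule. *)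

From Stdlib Require Import Reals.
From Coquelicot Require Import Coquelicot.
Open Scope R_scope.

Definition PVI_alpha (th4 : R) : R := (th4 - 1) ^ 2 / 2.
Definition PVI_beta  (th1 : R) : R := - (th1 ^ 2) / 2.
Definition PVI_gamma (th3 : R) : R := th3 ^ 2 / 2.
Definition PVI_delta (th2 : R) : R := (1 - th2 ^ 2) / 2.

(* Right-hand side of P_VI: y'' = PVI_rhs t y y' *)
Definition PVI_rhs (th1 th2 th3 th4 t y y1 : R) : R :=
  / 2 * (/ y + / (y - 1) + / (y - t)) * y1 ^ 2
  - (/ t + / (t - 1) + / (y - t)) * y1
  + y * (y - 1) * (y - t) / (t ^ 2 * (t - 1) ^ 2)
    * (PVI_alpha th4 + PVI_beta th1 * t / y ^ 2
       + PVI_gamma th3 * (t - 1) / (y - 1) ^ 2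
       + PVI_delta th2 * t * (t - 1) / (y - t) ^ 2).

(* For a curve s |-> (T s, Y s), the derivatives of y with respect to t
   computed by the chain rule: dy/dt = Y'/T', d^2y/dt^2 = (dy/dt)'/T'. *)
Definition dydt (Y T : R -> R) (s : R) : R := Derive Y s / Derive T s.
Definition d2ydt2 (Y T : R -> R) (s : R) : R := Derive (dydt Y T) s / Derive T s.

Definition solves_PVI_at (th1 th2 th3 th4 : R) (Y T : R -> R) (s : R) : Prop :=
  d2ydt2 Y T s = PVI_rhs th1 th2 th3 th4 (T s) (Y s) (dydt Y T s).

Definition Ysol (s : R) : R :=
  9 * s * (2 * s ^ 3 - 3 * s + 4) /
  (4 * (s + 1) * (s - 1) ^ 2 * (2 * s ^ 2 + 6 * s + 1)).
Definition Tsol (s : R) : R := 27 * s ^ 2 / (4 * (s ^ 2 - 1) ^ 3).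

(* Along the curve the chain rule gives y' = Y'/T' and y'' = (Y'' T' - Y' T'')/T'^3,
   where Y, T and their first two s-derivatives are explicit rational functions of s.
   Substituting these into P_VI leaves a rational identity in s, checked by [field];
   its denominators are nonzero because y - 1, t - 1 and y - t factor as
   -(s^2-4)(4s-1)(2s^2+1)/..., -(s^2-4)(2s^2+1)^2/... and 9s(s^2-4)(2s^4+2s^3+3s^2+s+1)/...,
   so the nondegeneracy hypotheses exclude exactly the vanishing factors. *)
From Stdlib Require Import Reals Lra.
From Coquelicot Require Import Coquelicot.
Open Scope R_scope.

Section ParametricDerivatives.

Variables (Y T Y' T' : R -> R) (s Y'' T'' : R).
Hypothesis derive_Y : locally s (fun x => is_derive Y x (Y' x)).
Hypothesis derive_T : locally s (fun x => is_derive T x (T' x)).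
Hypothesis derive_Y' : is_derive Y' s Y''.
Hypothesis derive_T' : is_derive T' s T''.
Hypothesis T'_neq0 : T' s <> 0.

Lemma dydt_near : locally s (fun x => dydt Y T x = Y' x / T' x).
Proof.
apply (filter_imp (fun x => is_derive Y x (Y' x) /\ is_derive T x (T' x))).
- intros x [dY dT]. unfold dydt.
  now rewrite (is_derive_unique _ _ _ dY), (is_derive_unique _ _ _ dT).
- now apply filter_and.
Qed.

Lemma dydtE : dydt Y T s = Y' s / T' s.
Proof. exact (locally_singleton _ _ dydt_near). Qed.

Lemma d2ydt2E : d2ydt2 Y T s = (Y'' * T' s - Y' s * T'') / T' s ^ 3.
Proof.
unfold d2ydt2.
rewrite (Derive_ext_loc (dydt Y T) (fun x : R => Y' x / T' x) s dydt_near).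
rewrite (is_derive_unique _ _ _ (is_derive_div _ _ _ _ _ derive_Y' derive_T' T'_neq0)).
rewrite (is_derive_unique _ _ _ (locally_singleton _ _ derive_T)).
field; auto.
Qed.

End ParametricDerivatives.

Definition regular_point (s : R) : Prop :=
  s <> 1 /\ s <> -1 /\ 2 * s ^ 2 + 6 * s + 1 <> 0.

Lemma locally_neq0 (f : R -> R) (s : R) :
  continuous f s -> f s <> 0 -> locally s (fun x => f x <> 0).
Proof. intros cf fs. apply (cf (fun u => u <> 0)), (open_neq 0), fs. Qed.

Lemma locally_regular_point (s : R) :
  regular_point s -> locally s regular_point.
Proof.
intros [s1 [s_1 q0]].
assert (near_neq0 : forall f : R -> R,
  ex_derive f s -> f s <> 0 -> locally s (fun x => f x <> 0)).
{ intros f df. apply locally_neq0. exact (ex_derive_continuous f s df). }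
apply filter_and; [|apply filter_and].
- apply (filter_imp (fun x => x - 1 <> 0)); [intros; lra|].
  apply (near_neq0 (fun x => x - 1)); [auto_derive; easy | lra].
- apply (filter_imp (fun x => x + 1 <> 0)); [intros; lra|].
  apply (near_neq0 (fun x => x + 1)); [auto_derive; easy | lra].
- apply (near_neq0 (fun x => 2 * x ^ 2 + 6 * x + 1)); [auto_derive; easy | easy].
Qed.

Definition Ysol_d1 (s : R) : R :=
  -9 * (4 - 2 * s + 3 * s ^ 2 + 67 * s ^ 3 + 28 * s ^ 4 + 4 * s ^ 6 + 4 * s ^ 7)
  / (4 * (s + 1) ^ 2 * (s - 1) ^ 3 * (2 * s ^ 2 + 6 * s + 1) ^ 2).

Definition Ysol_d2 (s : R) : R :=
  (-414 + 252 * s + 3348 * s ^ 2 + 5328 * s ^ 3 + 7470 * s ^ 4 + 18036 * s ^ 5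
   + 13428 * s ^ 6 + 3960 * s ^ 7 + 648 * s ^ 8 + 288 * s ^ 9 + 144 * s ^ 10)
  / (4 * (s + 1) ^ 3 * (s - 1) ^ 4 * (2 * s ^ 2 + 6 * s + 1) ^ 3).

Definition Tsol_d1 (s : R) : R := -27 * s * (2 * s ^ 2 + 1) / (2 * (s ^ 2 - 1) ^ 4).

Definition Tsol_d2 (s : R) : R :=
  27 * (10 * s ^ 4 + 13 * s ^ 2 + 1) / (2 * (s ^ 2 - 1) ^ 5).

Lemma sqr_sub1_neq0 (s : R) : s <> 1 -> s <> -1 -> s ^ 2 - 1 <> 0.
Proof.
intros s1 s_1. replace (s ^ 2 - 1) with ((s - 1) * (s + 1)) by ring.
apply Rmult_integral_contrapositive_currified; lra.
Qed.

Ltac neq0 := repeat first [ assumption | lra | progress (repeat split)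
  | apply Rmult_integral_contrapositive_currified | apply pow_nonzero
  | apply Rinv_neq_0_compat ].

Lemma is_derive_Ysol (s : R) : regular_point s -> is_derive Ysol s (Ysol_d1 s).
Proof.
intros [s1 [s_1 q0]]. unfold Ysol, Ysol_d1.
auto_derive; [neq0 | field; neq0].
Qed.

Lemma is_derive_Ysol_d1 (s : R) : regular_point s -> is_derive Ysol_d1 s (Ysol_d2 s).
Proof.
intros [s1 [s_1 q0]]. unfold Ysol_d1, Ysol_d2.
auto_derive; [neq0 | field; neq0].
Qed.

Lemma is_derive_Tsol (s : R) : regular_point s -> is_derive Tsol s (Tsol_d1 s).
Proof.
intros [s1 [s_1 _]]. pose proof (sqr_sub1_neq0 s s1 s_1). unfold Tsol, Tsol_d1.
auto_derive; [neq0 | field; neq0].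
Qed.

Lemma is_derive_Tsol_d1 (s : R) : regular_point s -> is_derive Tsol_d1 s (Tsol_d2 s).
Proof.
intros [s1 [s_1 _]]. pose proof (sqr_sub1_neq0 s s1 s_1). unfold Tsol_d1, Tsol_d2.
auto_derive; [neq0 | field; neq0].
Qed.

Lemma Ysol_sub1 (s : R) : regular_point s ->
  Ysol s - 1 = - ((s ^ 2 - 4) * (4 * s - 1) * (2 * s ^ 2 + 1))
               / (4 * (s + 1) * (s - 1) ^ 2 * (2 * s ^ 2 + 6 * s + 1)).
Proof. intros [s1 [s_1 q0]]. unfold Ysol. field; neq0. Qed.

Lemma Tsol_sub1 (s : R) : regular_point s ->
  Tsol s - 1 = - ((s ^ 2 - 4) * (2 * s ^ 2 + 1) ^ 2) / (4 * (s ^ 2 - 1) ^ 3).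
Proof.
intros [s1 [s_1 _]]. pose proof (sqr_sub1_neq0 s s1 s_1). unfold Tsol. field; neq0.
Qed.

Lemma Ysol_sub_Tsol (s : R) : regular_point s ->
  Ysol s - Tsol s =
  9 * s * (s ^ 2 - 4) * (2 * s ^ 4 + 2 * s ^ 3 + 3 * s ^ 2 + s + 1)
  / (4 * (s + 1) ^ 3 * (s - 1) ^ 3 * (2 * s ^ 2 + 6 * s + 1)).
Proof.
intros [s1 [s_1 q0]]. pose proof (sqr_sub1_neq0 s s1 s_1). unfold Ysol, Tsol.
field; neq0.
Qed.

Lemma PVI_identity (s : R) : regular_point s -> s <> 0 ->
  2 * s ^ 3 - 3 * s + 4 <> 0 -> s ^ 2 - 4 <> 0 -> 4 * s - 1 <> 0 ->
  2 * s ^ 4 + 2 * s ^ 3 + 3 * s ^ 2 + s + 1 <> 0 ->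
  (Ysol_d2 s * Tsol_d1 s - Ysol_d1 s * Tsol_d2 s) / Tsol_d1 s ^ 3 =
  PVI_rhs (1/2) (1/2) (1/4) (2/3) (Tsol s) (Ysol s) (Ysol_d1 s / Tsol_d1 s).
Proof.
intros reg s0 hY hS hL hQ.
assert (hP : 2 * s ^ 2 + 1 <> 0) by nra.
unfold PVI_rhs. rewrite (Ysol_sub1 s reg), (Tsol_sub1 s reg), (Ysol_sub_Tsol s reg).
destruct reg as [s1 [s_1 q0]]. pose proof (sqr_sub1_neq0 s s1 s_1).
unfold Ysol, Tsol, Ysol_d1, Ysol_d2, Tsol_d1, Tsol_d2,
  PVI_alpha, PVI_beta, PVI_gamma, PVI_delta.
field; neq0.
Qed.

Lemma Tsol_d1_neq0 (s : R) : regular_point s -> s <> 0 -> Tsol_d1 s <> 0.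
Proof.
intros [s1 [s_1 _]] s0. pose proof (sqr_sub1_neq0 s s1 s_1).
assert (2 * s ^ 2 + 1 <> 0) by nra.
unfold Tsol_d1, Rdiv. neq0.
Qed.

Theorem mainTheorem6 : forall s : R,
  s <> 0 -> s <> 1 -> s <> -1 -> 2 * s ^ 2 + 6 * s + 1 <> 0 ->
  Derive Tsol s <> 0 ->
  Tsol s <> 1 -> Ysol s <> 0 -> Ysol s <> 1 -> Ysol s <> Tsol s ->
  solves_PVI_at (1/2) (1/2) (1/4) (2/3) Ysol Tsol s.
Proof.
intros s s0 s1 s_1 q0 _ t1 y0 y1 yt.
assert (reg : regular_point s) by (repeat split; assumption).
pose proof (locally_regular_point s reg) as near_reg.
unfold solves_PVI_at.
rewrite (d2ydt2E _ _ _ _ _ _ _ (filter_imp _ _ is_derive_Ysol near_reg)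
  (filter_imp _ _ is_derive_Tsol near_reg) (is_derive_Ysol_d1 s reg)
  (is_derive_Tsol_d1 s reg) (Tsol_d1_neq0 s reg s0)).
rewrite (dydtE _ _ _ _ _ (filter_imp _ _ is_derive_Ysol near_reg)
  (filter_imp _ _ is_derive_Tsol near_reg)).
apply PVI_identity; try assumption.
- intro E. apply y0. unfold Ysol. rewrite E. unfold Rdiv. ring.
- intro E. apply t1, Rminus_diag_uniq. rewrite (Tsol_sub1 s reg), E. unfold Rdiv. ring.
- intro E. apply y1, Rminus_diag_uniq. rewrite (Ysol_sub1 s reg), E. unfold Rdiv. ring.
- intro E. apply yt, Rminus_diag_uniq. rewrite (Ysol_sub_Tsol s reg), E. unfold Rdiv. ring.
Qed.
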